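(* Assume $N>2m$, where $m=\max_i r_i$. Fix all reported data except bidder $i$'s unit price. If bidder $i$ wins (is selected) under Algorithm 3 with unit price $v_i$, then it also wins with every unit price $v_i'>v_i$. Equivalently, the (deterministic) winning probability of bidder $i$ is monotonically non-decreasing in its bidding price.
   Context: Setting: a finite set of bidders $\mathcal{B}=\mathcal{B}_r\cup\mathcal{B}_u$ and $N$ resource blocks $k=1,\dots,N$, each in a sub-band $p(k)$. Bidder $i$ reports a positive integer $r_i$, a unit price $v_i\ge0$ and CQI values $c_{i,s}$ for each sub-band $s$. $\mathrm{CR}_c\ge0$ is the number of bits per RB at CQI $c$. Let $R_{ik}=v_i\mathrm{CR}_{c_{i,p(k)}}$, $m=\max_ir_i$ and $\delta=N/m$. Algorithm 3: 1. Initialize $x=0$, $\mathcal{C}_1=\emptyset$, $\mathcal{C}_2=\emptyset$, $t=0$, $\lambda_k^0=1/N$. 2. While $\mathcal{C}_1\ne\mathcal{B}$ and $\sum_k\lambda_k^t\le\exp(\delta-2)$: (a) choose $(\mu,\mathcal{D})$ maximizing $\sum_{k\in\mathcal{D}}R_{\mu k}$ over $\mu\in\mathcal{B}\setminus\mathcal{C}_1$ and $\mathcal{D}\subseteq\{1,\dots,N\}\setminus\mathcal{C}_2$ with $|\mathcal{D}|=r_\mu$; (b) set $x_\mu=1$, $a_{\mu k}=1$ for $k\in\mathcal{D}$, $\mathcal{C}_1\leftarrow\mathcal{C}_1\cup\{\mu\}$, $\mathcal{C}_2\leftarrow\mathcal{C}_2\cup\mathcal{D}$; (c) set $\lambda_k^{t+1}=\lambda_k^t\exp(\delta-2)^{r_\mu/(N-2m)}$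 for all $k$, and $t\leftarrow t+1$. Bidder $i$ wins if $x_i=1$. *)

From HB Require Import structures.
From mathcomp Require Import all_boot all_order all_algebra.
From mathcomp Require Import reals.
From mathcomp Require Import sequences exp.
Set Implicit Arguments. Unset Strict Implicit. Unset Printing Implicit Defensive.
Import Order.TTheory GRing.Theory Num.Theory.
Local Open Scope ring_scope.

Section Alg3.
Variables (R : realType) (B : finType) (N S : nat).
Variable (sb : 'I_N -> 'I_S).          (* p(k): sub-band of resource block k *)
Variable (CR : nat -> R).              (* CR_c : bits per RB at CQI c *)
Variable (r : B -> nat).               (* requested number of RBs r_i *)
Variable (cqi : B -> 'I_S -> nat).     (* reported CQI c_{i,s} *)
Variable (v : B -> R).

Definition Rval (j : B) (k : 'I_N) : R := v j * CR (cqi j (sb k)).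

Definition mmax : nat := \max_(j : B) r j.
Definition delta : R := N%:R / (mmax%:R).

(* algorithm state: C1 (selected bidders; x_mu = 1 iff mu \in C1),
   C2 (allocated RBs), and the multipliers lambda_k *)
Record state := State { C1 : {set B}; C2 : {set 'I_N}; lam : 'I_N -> R }.

Definition init_state : state := State set0 set0 (fun _ => (N%:R)^-1).

Definition feasible (st : state) (p : B * {set 'I_N}) : bool :=
  [&& p.1 \notin C1 st, p.2 \subset ~: C2 st & #|p.2| == r p.1].

Definition pairval (p : B * {set 'I_N}) : R := \sum_(k in p.2) Rval p.1 k.

(* Deterministic choice in step 2(a): the first maximizer (w.r.t. the fixed
   enumeration order of the finite type B * {set 'I_N}). *)
Definition choose_pair (st : state) : option (B * {set 'I_N}) :=
  [pick p | feasible st p &&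
            [forall q, feasible st q ==> (pairval q <= pairval p)]].

Definition guard (st : state) : bool :=
  (C1 st != setT) && (\sum_(k < N) lam st k <= expR (delta - 2)).

Definition update (st : state) (p : B * {set 'I_N}) : state :=
  State (p.1 |: C1 st) (C2 st :|: p.2)
        (fun k => lam st k *
                  powR (expR (delta - 2)) ((r p.1)%:R / (N%:R - 2 * mmax%:R))).

Fixpoint run (fuel : nat) (st : state) : state :=
  match fuel with
  | 0 => st
  | n.+1 => if guard st then
              match choose_pair st with
              | Some p => run n (update st p)
              | None => st
              end
            else st
  end.

(* Each iteration adds a new bidder to C1, so #|B| iterations suffice for the
   while loop to terminate. *)
Definition alg3 : state := run #|B| init_state.

Definition wins (j : B) : bool := j \in C1 alg3.

End Alg3.

From HB Require Import structures.
From mathcomp Require Import all_boot all_order all_algebra.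
From mathcomp Require Import reals.
From mathcomp Require Import sequences exp.
Import Order.TTheory GRing.Theory Num.Theory.
Local Open Scope ring_scope.

(* Neither the loop guard nor the state update depends on the prices, so only
   the choice in step 2(a) can differ between the runs with prices v and v'.
   Raising v_i raises the value of every pair of bidder i and leaves all other
   values unchanged.  Hence at each iteration the run with v' either selects
   bidder i, who then stays selected, or selects a pair (mu, D) with mu <> i;
   such a pair is still a maximizer for v, and since every v-maximizer is then
   also a v'-maximizer, it is even the first v-maximizer in the enumeration
   order, i.e. both runs perform the same step. *)

Lemma ohead_filter_subpred (T : eqType) (P Q : pred T) (s : seq T) (x : T) :
  (forall y, P y -> Q y) -> P x -> ohead (filter Q s) = Some x ->
  ohead (filter P s) = Some x.
Proof.
move=> sPQ Px; elim: s => [//|y s IHs] /=.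
case Qy: (Q y) => /=; first by case=> ->; rewrite Px.
case Py: (P y); last exact: IHs.
by rewrite sPQ in Qy.
Qed.

Lemma pick_subpred (T : finType) (P Q : pred T) (x : T) :
  (forall y, P y -> Q y) -> P x -> pick Q = Some x -> pick P = Some x.
Proof. exact: ohead_filter_subpred. Qed.

Section FirstMaximizer.
Context {T : finType} {d : Order.disp_t}.

Definition first_maximizer {X : porderType d} (F : pred T) (f : T -> X) :=
  [pick p | F p && [forall q, F q ==> (f q <= f p)%O]].

Lemma first_maximizer_isSome {X : orderType d} (F : pred T) (f : T -> X) :
  isSome (first_maximizer F f) = [exists x, F x].
Proof.
rewrite /first_maximizer; case: pickP => [x /andP[Fx _] | no_max].
  by apply/esym/existsP; exists x.
apply/esym/existsP => -[x Fx].
case: (arg_maxP f Fx) => y Fy y_max.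
have /negP := no_max y; apply; rewrite Fy.
by apply/forallP => q; apply/implyP; exact: y_max.
Qed.

Lemma first_maximizer_le {X : porderType d} (F : pred T) (f g : T -> X) q :
  (forall x, (f x <= g x)%O) -> f q = g q ->
  first_maximizer F g = Some q -> first_maximizer F f = Some q.
Proof.
move=> le_fg fq_gq gq_first.
have [Fq gq_max] : F q /\ forall x, F x -> (g x <= g q)%O.
  move: gq_first; rewrite /first_maximizer.
  case: pickP => // y /andP[Fy /forallP y_max] [<-].
  by split=> // x Fx; exact: implyP (y_max x) Fx.
apply: pick_subpred gq_first => [x | ] /=.
  case/andP=> Fx /forallP fx_max; rewrite Fx /=.
  have gq_le_gx : (g q <= g x)%O.
    by rewrite -fq_gq; apply: le_trans (le_fg x); exact: implyP (fx_max q) Fq.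
  by apply/forallP => y; apply/implyP => Fy; exact: le_trans (gq_max y Fy) _.
rewrite Fq /=; apply/forallP => x; apply/implyP => Fx.
by rewrite fq_gq; exact: le_trans (le_fg x) (gq_max x Fx).
Qed.

End FirstMaximizer.

Section RaisePrice.
Context {R : realType} {B : finType} {N S : nat}.
Context {sb : 'I_N -> 'I_S} {CR : nat -> R} {r : B -> nat}.
Context {cqi : B -> 'I_S -> nat}.

Lemma choose_pairE (v : B -> R) st :
  choose_pair sb CR r cqi v st =
  first_maximizer (feasible r st) (pairval sb CR cqi v).
Proof. by []. Qed.

Lemma C1_run (v : B -> R) n st : C1 st \subset C1 (run sb CR r cqi v n st).
Proof.
elim: n st => [//|n IHn] st /=.
case: (guard r st) => //; case: (choose_pair _ _ _ _ _ st) => // p.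
by apply: subset_trans (IHn _); apply: subsetUr.
Qed.

Lemma C1_run_update (v : B -> R) n st p :
  p.1 \in C1 (run sb CR r cqi v n (update r st p)).
Proof. by apply: (subsetP (C1_run v n _)); rewrite /= setU11. Qed.

Hypothesis CR_ge0 : forall c, 0 <= CR c.
Context {v v' : B -> R} {i : B}.
Hypothesis le_vi : v i <= v' i.
Hypothesis eq_v : forall j, j != i -> v' j = v j.

Lemma pairval_le_raise q : pairval sb CR cqi v q <= pairval sb CR cqi v' q.
Proof.
apply: ler_sum => k _; rewrite /Rval.
by case: (eqVneq q.1 i) => [-> | /eq_v ->]; first exact: ler_wpM2r.
Qed.

Lemma pairval_raise_other q :
  q.1 != i -> pairval sb CR cqi v q = pairval sb CR cqi v' q.
Proof. by move=> /eq_v vq; apply: eq_bigr => k _; rewrite /Rval vq. Qed.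

Lemma run_raise_price n st :
  i \in C1 (run sb CR r cqi v n st) -> i \in C1 (run sb CR r cqi v' n st).
Proof.
elim: n st => [//|n IHn] st /=.
case: (guard r st) => //.
have := first_maximizer_isSome (feasible r st) (pairval sb CR cqi v').
rewrite -(first_maximizer_isSome _ (pairval sb CR cqi v)) -!choose_pairE.
case chosen: (choose_pair _ _ _ _ v st) => [p|];
  case chosen': (choose_pair _ _ _ _ v' st) => [q|] // _.
case: (eqVneq q.1 i) => [<- _ | qi]; first exact: C1_run_update.
suff -> : p = q by exact: IHn.
apply: Some_inj; rewrite -chosen choose_pairE.
apply: first_maximizer_le chosen'.
  exact: pairval_le_raise.
exact: pairval_raise_other qi.
Qed.

End RaisePrice.

Theorem lemma2 (R : realType) (B : finType) (N S : nat)
  (sb : 'I_N -> 'I_S) (CR : nat -> R) (r : B -> nat)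
  (cqi : B -> 'I_S -> nat) (v : B -> R)
  (hr : forall j, (0 < r j)%N) (hCR : forall c, 0 <= CR c)
  (hv : forall j, 0 <= v j)
  (hN : (2 * mmax r < N)%N)
  (i : B) (vi' : R) (hvi' : v i < vi') :
  wins sb CR r cqi v i ->
  wins sb CR r cqi (fun j => if j == i then vi' else v j) i.
Proof.
set v' := fun j => if j == i then vi' else v j.
have le_vi : v i <= v' i by rewrite /v' eqxx ltW.
have eq_v j : j != i -> v' j = v j by rewrite /v' => /negbTE ->.
exact: (run_raise_price hCR le_vi eq_v).
Qed.
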